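(* Let $N,K,V$ be positive integers. For $v=1,\dots,V$ let $\mathbf{z}_i^v\in\mathbb{R}^{d_v}$ ($i=1,\dots,N$) be representations, $\boldsymbol{\mu}_1^v,\dots,\boldsymbol{\mu}_K^v\in\mathbb{R}^{d_v}$ cluster centroids, and $w^v>0$ scaling factors. Let $\mathcal{S}(\mathbf{a},\mathbf{b})=\frac{1}{1+\|\mathbf{a}-\mathbf{b}\|_2^2}$ and define view-wise soft labels $y_{ij}^v=\mathcal{S}(\mathbf{z}_i^v,\boldsymbol{\mu}_j^v)/\sum_{k=1}^K\mathcal{S}(\mathbf{z}_i^v,\boldsymbol{\mu}_k^v)$. Define the scaled representation $\mathbf{z}_i=[w^1\mathbf{z}_i^1\ \cdots\ w^V\mathbf{z}_i^V]$, the scaled centroids $\mathbf{c}_j=[w^1\boldsymbol{\mu}_j^1\ \cdots\ w^V\boldsymbol{\mu}_j^V]$, and the robust soft labels $y_{ij(t)}=\mathcal{S}(\mathbf{z}_i,\mathbf{c}_j)/\sum_{k=1}^K\mathcal{S}(\mathbf{z}_i,\mathbf{c}_k)$. Suppose that for a sample $i$ and a cluster $a$, the sample is informative and assigned to cluster $a$ in every view, i.e. $y_{ia}^v>y_{ij}^v$ for all $j\neq a$ and all $v=1,\dots,V$. Then $y_{ia(t)}>y_{ij(t)}$ for all $j\neq a$, i.e. the cluster assignment $\arg\max_j y_{ij(t)}$ of the sample in the robust soft labels is also $a$.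
   Context: Setting: multi-view clustering with $N$ samples, $V$ views, and $K$ clusters; $\mathbf{z}_i^v$ is the learned representation of sample $i$ in view $v$, and the cluster assignment of sample $i$ from soft labels $y_{ij}$ is $\arg\max_j y_{ij}$. *)

From mathcomp Require Import all_boot all_order all_algebra.
Set Implicit Arguments. Unset Strict Implicit. Unset Printing Implicit Defensive.
Import Order.TTheory GRing.Theory Num.Theory.
Local Open Scope ring_scope.

Definition sqdist (R : realFieldType) (n : nat) (a b : 'rV[R]_n) : R :=
  \sum_(k < n) (a 0 k - b 0 k) ^+ 2.

Definition simS (R : realFieldType) (n : nat) (a b : 'rV[R]_n) : R :=
  1 / (1 + sqdist a b).

Definition soft_label (R : realFieldType) (n N K : nat)
  (z : 'I_N -> 'rV[R]_n) (c : 'I_K -> 'rV[R]_n) (i : 'I_N) (j : 'I_K) : R :=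
  simS (z i) (c j) / \sum_(k < K) simS (z i) (c k).

Definition scaled_concat (R : realFieldType) (V : nat) (d : 'I_V -> nat)
  (w : 'I_V -> R) (x : forall v : 'I_V, 'rV[R]_(d v)) : 'rV[R]_(\sum_(v < V) d v) :=
  \mxrow_(v < V) (w v *: x v).

(* The squared distance between scaled concatenations is the w^2-weighted sum
   of the view-wise squared distances, so a centroid that is strictly nearest
   in every view is strictly nearest in the concatenation.  Soft labels of one
   sample share their (positive) normaliser and S is strictly decreasing in the
   squared distance, so comparing soft labels is comparing squared distances. *)

From mathcomp Require Import all_boot all_order all_algebra.
Import Order.TTheory GRing.Theory Num.Theory.
Local Open Scope ring_scope.

Section SquaredDistance.

Variable R : realFieldType.

Lemma sqdistE n (a b : 'rV[R]_n) : sqdist a b = ((a - b) *m (a - b)^T) 0 0.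
Proof. by rewrite /sqdist !mxE; apply: eq_bigr => k _; rewrite !mxE expr2. Qed.

Lemma sqdist_ge0 n (a b : 'rV[R]_n) : 0 <= sqdist a b.
Proof. by apply: sumr_ge0 => k _; apply: sqr_ge0. Qed.

Lemma sqdistZ n (c : R) (a b : 'rV[R]_n) :
  sqdist (c *: a) (c *: b) = c ^+ 2 * sqdist a b.
Proof.
by rewrite /sqdist mulr_sumr; apply: eq_bigr => k _; rewrite !mxE -mulrBr exprMn.
Qed.

Lemma sqdist_mxrow V (d : 'I_V -> nat) (a b : forall v : 'I_V, 'rV[R]_(d v)) :
  sqdist (\mxrow_v a v) (\mxrow_v b v) = \sum_(v < V) sqdist (a v) (b v).
Proof.
rewrite sqdistE -mxrowB tr_mxrow mul_mxrow_mxcol summxE.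
by apply: eq_bigr => v _; rewrite sqdistE.
Qed.

Lemma sqdist_scaled_concat V (d : 'I_V -> nat) (w : 'I_V -> R)
    (a b : forall v : 'I_V, 'rV[R]_(d v)) :
  sqdist (scaled_concat w a) (scaled_concat w b)
  = \sum_(v < V) w v ^+ 2 * sqdist (a v) (b v).
Proof. by rewrite sqdist_mxrow; apply: eq_bigr => v _; rewrite sqdistZ. Qed.

Lemma ltr_sqdist_scaled_concat V (d : 'I_V -> nat) (w : 'I_V -> R)
    (x y y' : forall v : 'I_V, 'rV[R]_(d v)) :
  (0 < V)%N -> (forall v, w v != 0) ->
  (forall v, sqdist (x v) (y v) < sqdist (x v) (y' v)) ->
  sqdist (scaled_concat w x) (scaled_concat w y)
  < sqdist (scaled_concat w x) (scaled_concat w y').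
Proof.
move=> V_gt0 w_neq0 lt_xy; rewrite !sqdist_scaled_concat.
apply: ltr_sum => [|v _]; first by apply/hasP; exists (Ordinal V_gt0).
by rewrite ltr_pM2l ?lt_xy // exprn_even_gt0 ?w_neq0 ?orbT.
Qed.

End SquaredDistance.

Section SoftLabels.

Variables (R : realFieldType) (n : nat).

Lemma simS_gt0 (a b : 'rV[R]_n) : 0 < simS a b.
Proof. by rewrite /simS div1r invr_gt0 ltr_wpDr ?sqdist_ge0. Qed.

Lemma ltr_simS (a b c : 'rV[R]_n) :
  (simS a b < simS a c) = (sqdist a c < sqdist a b).
Proof.
by rewrite /simS !div1r ltf_pV2 ?ltrD2l // posrE ltr_wpDr ?sqdist_ge0.
Qed.

Lemma ltr_soft_label N K (z : 'I_N -> 'rV[R]_n) (c : 'I_K -> 'rV[R]_n) i j a :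
  (soft_label z c i j < soft_label z c i a)
  = (sqdist (z i) (c a) < sqdist (z i) (c j)).
Proof.
rewrite /soft_label ltr_pM2r ?ltr_simS // invr_gt0 (bigD1 j) //=.
by rewrite ltr_wpDr ?simS_gt0 // sumr_ge0 // => k _; rewrite ltW ?simS_gt0.
Qed.

End SoftLabels.

Theorem theorem3 (R : realFieldType) (N K V : nat) (d : 'I_V -> nat)
  (z : forall v : 'I_V, 'I_N -> 'rV[R]_(d v))
  (mu : forall v : 'I_V, 'I_K -> 'rV[R]_(d v))
  (w : 'I_V -> R) :
  (0 < N)%N -> (0 < K)%N -> (0 < V)%N ->
  (forall v, 0 < w v) ->
  forall (i : 'I_N) (a : 'I_K),
  (forall (v : 'I_V) (j : 'I_K), j != a ->
     soft_label (z v) (mu v) i j < soft_label (z v) (mu v) i a) ->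
  forall j : 'I_K, j != a ->
    soft_label (fun i' => scaled_concat w (fun v => z v i'))
               (fun j' => scaled_concat w (fun v => mu v j')) i j
    < soft_label (fun i' => scaled_concat w (fun v => z v i'))
                 (fun j' => scaled_concat w (fun v => mu v j')) i a.
Proof.
move=> _ _ V_gt0 w_gt0 i a a_nearest j j_neq_a.
rewrite ltr_soft_label; apply: ltr_sqdist_scaled_concat => // [v|v].
- by rewrite gt_eqF.
- by rewrite -ltr_soft_label a_nearest.
Qed.
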